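(* Let $f:\mathbb{R}^k\to\mathbb{R}$ be a $C^1$ function and fix a constant $0<\alpha<1$. Let $\{x_n\}_{n\ge 0}$ be a sequence in $\mathbb{R}^k$ and $\{\delta_n\}_{n\ge 0}$ a sequence of positive numbers such that for every $n$, $x_{n+1}=x_n-\delta_n\nabla f(x_n)$ and Armijo's condition $f(x_n-\delta_n\nabla f(x_n))-f(x_n)\le -\alpha\delta_n\|\nabla f(x_n)\|^2$ holds. Assume that $\nabla f(x_n)\neq 0$ for all $n$, and that $\{x_n\}$ converges to a point $x_\infty$ which is a non-degenerate critical point of $f$, i.e. $\nabla f(x_\infty)=0$, $f$ is $C^2$ in a neighbourhood of $x_\infty$, and the Hessian $\nabla^2 f(x_\infty)$ is invertible. Then for every $\epsilon>0$ there exists $n_\epsilon$ such that for all $n\ge n_\epsilon$, $$\alpha\delta_n\le \frac12\left(\|\nabla^2 f(x_\infty)\|+\epsilon\right)\left(\|\nabla^2 f(x_\infty)^{-1}\|+\epsilon\right)^2.$$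
   Context: $\|\cdot\|$ denotes the Euclidean norm on vectors and the corresponding operator norm on matrices. *)

(* R^k is modelled as row vectors 'rV[R]_k. *)
From HB Require Import structures.
From mathcomp Require Import all_boot all_order all_algebra.
From mathcomp Require Import all_classical all_reals all_analysis.
Set Implicit Arguments. Unset Strict Implicit. Unset Printing Implicit Defensive.
Import Order.TTheory GRing.Theory Num.Theory.
Import numFieldNormedType.Exports.
Local Open Scope classical_set_scope.
Local Open Scope ring_scope.

Definition enorm {R : realType} {k : nat} (v : 'rV[R]_k) : R :=
  Num.sqrt (\sum_(i < k) v ord0 i ^+ 2).

(* operator norm of a k x k matrix (acting on column vectors) w.r.t. the
   Euclidean norm *)
Definition opnorm {R : realType} {k : nat} (A : 'M[R]_k) : R :=
  sup [set r | exists v : 'rV[R]_k, enorm v <= 1 /\ r = enorm (v *m A^T)].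

Definition ebasis {R : realType} {k : nat} (i : 'I_k) : 'rV[R]_k :=
  \row_j (if j == i then 1 else 0).

Definition grad {R : realType} {k : nat} (f : 'rV[R]_k -> R) (x : 'rV[R]_k)
  : 'rV[R]_k := \row_i ('D_(ebasis i) f x).

Definition hessian {R : realType} {k : nat} (f : 'rV[R]_k -> R) (x : 'rV[R]_k)
  : 'M[R]_k := \matrix_(i, j) ('D_(ebasis j) (fun y => grad f y ord0 i) x).

Definition C1 {R : realType} {k : nat} (f : 'rV[R]_k -> R) : Prop :=
  (forall x, differentiable f x) /\ continuous (grad f).

Definition C2_near {R : realType} {k : nat} (f : 'rV[R]_k -> R) (x0 : 'rV[R]_k)
  : Prop :=
  exists2 e : R, 0 < e &
    forall y, ball x0 e y ->
      differentiable f y /\ differentiable (grad f) y /\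
      {for y, continuous (hessian f)}.

From HB Require Import structures.
From mathcomp Require Import all_boot all_order all_algebra.
From mathcomp Require Import all_classical all_reals all_analysis.
From mathcomp Require Import ring lra.
Import Order.TTheory GRing.Theory Num.Theory.
Import numFieldNormedType.Exports.
Local Open Scope classical_set_scope.
Local Open Scope ring_scope.

(* Write H for the Hessian at x_inf, v_n := x_n - x_inf and g_n := grad f(x_n).
   Near x_inf the gradient is H v up to o(|v|), so on one hand
   |v_n| <= (|H^-1| + eps) |g_n|, and on the other, integrating along the
   segment from x_inf, f(x_n) - f(x_inf) <= (|H| + eps)/2 |v_n|^2.  Armijo's
   condition makes f(x_n) nonincreasing, hence f(x_inf) <= f(x_(n+1)), and
   alpha delta_n |g_n|^2 <= f(x_n) - f(x_(n+1)) <= f(x_n) - f(x_inf).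
   Chaining the three inequalities and dividing by |g_n|^2 gives the bound. *)

Lemma ler_absorb {R : realFieldType} (a b B eta eps : R) :
  0 <= B -> 0 < eps -> 0 <= b -> B * eta * (B + eps) <= eps ->
  a <= B * (b + eta * a) -> a <= (B + eps) * b.
Proof.
move=> B_ge0 eps_gt0 b_ge0 small a_le.
have Beta_lt1 : B * eta < 1.
  rewrite ltNge; apply/negP => Beta_ge1.
  have Beps_le : B + eps <= eps.
    by apply: le_trans small; rewrite ler_peMl // addr_ge0 // ltW.
  have B0 : B = 0 by apply/le_anti; rewrite B_ge0 andbT; lra.
  by move: Beta_ge1; rewrite B0 mul0r ler10.
have : a * (1 - B * eta) <= (B + eps) * b * (1 - B * eta) by nra.
by rewrite ler_pM2r // subr_gt0.
Qed.

Section Euclidean.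
Context {R : realType} {k : nat}.
Implicit Types (u v w : 'rV[R]_k) (M : 'M[R]_k).

Definition dot u v : R := \sum_(i < k) u ord0 i * v ord0 i.

Lemma sum_sqr_ge0 u : 0 <= \sum_(i < k) u ord0 i ^+ 2.
Proof. by apply: sumr_ge0 => i _; rewrite sqr_ge0. Qed.

Lemma enorm_ge0 u : 0 <= enorm u.
Proof. exact: sqrtr_ge0. Qed.

Lemma enorm_sqr u : enorm u ^+ 2 = \sum_(i < k) u ord0 i ^+ 2.
Proof. by rewrite /enorm sqr_sqrtr // sum_sqr_ge0. Qed.

Lemma enorm_le_sqr u c :
  0 <= c -> \sum_(i < k) u ord0 i ^+ 2 <= c ^+ 2 -> enorm u <= c.
Proof. by move=> c_ge0 le_c; rewrite -(ger0_norm c_ge0) -sqrtr_sqr ler_wsqrtr. Qed.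

(* Lagrange's argument: expand 0 <= sum_i (|u|^2 v_i - (u.v) u_i)^2. *)
Lemma dot_sqr_le u v : dot u v ^+ 2 <= enorm u ^+ 2 * enorm v ^+ 2.
Proof.
rewrite !enorm_sqr; set a := \sum_i _; set b := \sum_i _; set c := dot u v.
have a_ge0 : 0 <= a by exact: sum_sqr_ge0.
have expand : \sum_(i < k) (a * v ord0 i - c * u ord0 i) ^+ 2 = a * (a * b - c ^+ 2).
  rewrite (eq_bigr (fun i => a ^+ 2 * v ord0 i ^+ 2
      - (2 * a * c) * (u ord0 i * v ord0 i) + c ^+ 2 * u ord0 i ^+ 2)); last first.
    by move=> i _; ring.
  by rewrite big_split /= big_split /= sumrN -!mulr_sumr /b /c /dot -/a; ring.
have : 0 <= a * (a * b - c ^+ 2).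
  by rewrite -expand; apply: sumr_ge0 => i _; rewrite sqr_ge0.
have [a_gt0 | a_lt0 | a0] := ltrgt0P a.
- by rewrite pmulr_rge0 // subr_ge0 mulrC.
- by move: a_lt0; rewrite ltNge a_ge0.
- have u0 i : u ord0 i = 0.
    apply/eqP; rewrite -sqrf_eq0; move/eqP: a0; rewrite psumr_eq0 => [/allP|j _].
      by apply; rewrite mem_index_enum.
    exact: sqr_ge0.
  have -> : c = 0 by rewrite /c /dot big1 // => i _; rewrite u0 mul0r.
  by move=> _; rewrite expr0n /= a0 mul0r.
Qed.

Lemma dot_le u v : dot u v <= enorm u * enorm v.
Proof.
apply: le_trans (ler_norm _) _.
rewrite -ler_sqr ?nnegrE ?mulr_ge0 ?enorm_ge0 // real_normK ?num_real //.
by rewrite exprMn dot_sqr_le.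
Qed.

Lemma enormZ (c : R) u : enorm (c *: u) = `|c| * enorm u.
Proof.
rewrite /enorm -sqrtr_sqr -sqrtrM ?sqr_ge0 //; congr Num.sqrt.
by rewrite mulr_sumr; apply: eq_bigr => i _; rewrite mxE exprMn.
Qed.

Lemma enorm0 : enorm (0 : 'rV[R]_k) = 0.
Proof. by rewrite -(scale0r 0) enormZ normr0 mul0r. Qed.

Lemma enormN u : enorm (- u) = enorm u.
Proof. by rewrite -scaleN1r enormZ normrN normr1 mul1r. Qed.

Lemma enormD u v : enorm (u + v) <= enorm u + enorm v.
Proof.
apply: enorm_le_sqr; first by rewrite addr_ge0 ?enorm_ge0.
have -> : \sum_(i < k) (u + v) ord0 i ^+ 2
    = enorm u ^+ 2 + 2 * dot u v + enorm v ^+ 2.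
  rewrite !enorm_sqr /dot mulr_sumr -!big_split /=.
  by apply: eq_bigr => i _; rewrite !mxE; ring.
rewrite sqrrD; have := dot_le u v.
by move: (dot u v) (enorm u) (enorm v) => c a b; lra.
Qed.

Lemma enormB u v : enorm (u - v) <= enorm u + enorm v.
Proof. by rewrite -(enormN v) enormD. Qed.

Lemma normr_entry_le_enorm u i : `|u ord0 i| <= enorm u.
Proof.
rewrite -(ger0_norm (enorm_ge0 u)) -ler_sqr ?nnegrE ?normr_ge0 //.
rewrite !real_normK ?num_real // enorm_sqr (bigD1 i) //= lerDl.
by apply: sumr_ge0 => j _; rewrite sqr_ge0.
Qed.

Lemma enorm_gt0 u : u != 0 -> 0 < enorm u.
Proof.
apply: contraNT; rewrite -leNgt => u_le0; apply/eqP/rowP => i; rewrite mxE.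
by apply/normr0_eq0/le_anti; rewrite normr_ge0 (le_trans (normr_entry_le_enorm u i)).
Qed.

Lemma normr_le_enorm u : `|u| <= enorm u.
Proof.
rewrite [leLHS]/Num.Def.normr /= mx_normrE.
apply: bigmax_le => [|[i j] _]; first exact: enorm_ge0.
by rewrite /= (ord1 i) normr_entry_le_enorm.
Qed.

Lemma enorm_le_normr u : enorm u <= k%:R * `|u|.
Proof.
have entry_le i : `|u ord0 i| <= `|u|.
  rewrite [leRHS]/Num.Def.normr /= mx_normrE.
  exact: (le_bigmax _ (fun ij : 'I_1 * 'I_k => `|u ij.1 ij.2|) (ord0, i)).
apply: enorm_le_sqr; first by rewrite mulr_ge0 ?normr_ge0.
apply: (@le_trans _ _ (\sum_(i < k) `|u| ^+ 2)).
  apply: ler_sum => i _; rewrite -real_normK ?num_real //.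
  by rewrite lerXn2r ?nnegrE ?normr_ge0.
rewrite sumr_const card_ord -[_ *+ k]mulr_natr exprMn [in leRHS]mulrC.
apply: ler_wpM2l; first exact: sqr_ge0.
rewrite -natrX ler_nat; case: (k) => // n.
by rewrite leq_pmulr.
Qed.

Lemma mul_tr_entry u M i : (u *m M^T) ord0 i = dot u (row i M).
Proof. by rewrite mxE; apply: eq_bigr => j _; rewrite !mxE. Qed.

Definition frobenius M : R := Num.sqrt (\sum_(i < k) enorm (row i M) ^+ 2).

Lemma enorm_mul_tr_le_frobenius u M : enorm (u *m M^T) <= frobenius M * enorm u.
Proof.
apply: enorm_le_sqr; first by rewrite mulr_ge0 ?enorm_ge0 ?sqrtr_ge0.
rewrite exprMn sqr_sqrtr; last by apply: sumr_ge0 => i _; rewrite sqr_ge0.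
by rewrite mulr_suml; apply: ler_sum => i _; rewrite mul_tr_entry mulrC dot_sqr_le.
Qed.

Lemma opnorm_ubound M :
  has_ubound [set r | exists v : 'rV[R]_k, enorm v <= 1 /\ r = enorm (v *m M^T)].
Proof.
exists (frobenius M) => _ [v [v_le1 ->]].
apply: le_trans (enorm_mul_tr_le_frobenius v M) _.
by rewrite ler_piMr ?sqrtr_ge0.
Qed.

Lemma opnorm_ge0 M : 0 <= opnorm M.
Proof.
apply: (ub_le_sup (opnorm_ubound M)).
by exists 0; rewrite enorm0 mul0mx enorm0 ler01.
Qed.

Lemma enorm_mul_tr_le_opnorm u M : enorm (u *m M^T) <= opnorm M * enorm u.
Proof.
have [->|u_neq0] := eqVneq u 0; first by rewrite mul0mx enorm0 mulr0.
have u_gt0 : 0 < enorm u by exact: enorm_gt0.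
have unit_u : enorm ((enorm u)^-1 *: u) <= 1.
  by rewrite enormZ ger0_norm ?invr_ge0 ?enorm_ge0 // mulVf ?gt_eqF.
have := ub_le_sup (opnorm_ubound M) (ex_intro _ _ (conj unit_u erefl)).
rewrite -/(opnorm M) -scalemxAl enormZ ger0_norm ?invr_ge0 ?enorm_ge0 //.
by rewrite ler_pdivrMl // mulrC.
Qed.

Lemma enorm_le_inverse M u w (eta : R) : M \in unitmx ->
  enorm (w - u *m M^T) <= eta * enorm u ->
  enorm u <= opnorm (invmx M) * (enorm w + eta * enorm u).
Proof.
move=> M_unit w_approx.
have uE : u = (w - (w - u *m M^T)) *m (invmx M)^T.
  by rewrite subKr -mulmxA -trmx_mul mulVmx // trmx1 mulmx1.
rewrite {1}uE; apply: le_trans (enorm_mul_tr_le_opnorm _ _) _.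
apply: ler_wpM2l; first exact: opnorm_ge0.
by apply: le_trans (enormB _ _) _; rewrite lerD2l.
Qed.

Lemma cvg_enorm_lt (x : nat -> 'rV[R]_k) (xinf : 'rV[R]_k) (rho : R) :
  x @ \oo --> xinf -> 0 < rho ->
  exists N, forall n, (N <= n)%N -> enorm (x n - xinf) < rho.
Proof.
move=> x_cvg rho_gt0.
have rho'_gt0 : 0 < rho / (k%:R + 1) by rewrite divr_gt0 // ltr_wpDl.
have [N _ close] := (cvgrPdist_lt _ _).1 x_cvg _ rho'_gt0.
exists N => n /close; rewrite /= distrC => xn_close.
apply: le_lt_trans (enorm_le_normr _) _.
apply: (@le_lt_trans _ _ ((k%:R + 1) * `|x n - xinf|)).
  by apply: ler_wpM2r; rewrite ?normr_ge0 ?lerDl.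
by rewrite mulrC -ltr_pdivlMr ?ltr_wpDl.
Qed.

End Euclidean.

Section Calculus.
Context {R : realType} {k : nat}.
Implicit Types (f : 'rV[R]_k -> R) (v y : 'rV[R]_k).

Lemma row_sum_ebasis v : v = \sum_(i < k) v ord0 i *: ebasis i.
Proof.
apply/rowP => j; rewrite summxE (bigD1 j) //= big1 ?addr0.
  by rewrite !mxE eqxx mulr1.
by move=> i ij; rewrite !mxE eq_sym (negbTE ij) mulr0.
Qed.

Lemma derive_grad_dot f y v : differentiable f y -> 'D_v f y = dot (grad f y) v.
Proof.
move=> df; rewrite deriveE // {1}(row_sum_ebasis v) linear_sum /dot.
by apply: eq_bigr => i _; rewrite linearZ /= -deriveE // /grad mxE mulrC.
Qed.

Lemma diff_grad_hessian f x0 h : differentiable (grad f) x0 ->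
  'd (grad f) x0 h = h *m (hessian f x0)^T.
Proof.
move=> dG; rewrite {1}(row_sum_ebasis h) linear_sum.
apply/rowP => i; rewrite summxE mxE; apply: eq_bigr => j _.
rewrite linearZ /= -deriveE // derive_mx; last exact: diff_derivable.
by rewrite !mxE.
Qed.

(* Both sides are limits of the same difference quotient. *)
Lemma derive_line f x0 v t :
  'D_1 (fun s : R => f (s *: v + x0)) t = 'D_v f (t *: v + x0) /\
  (derivable (fun s : R => f (s *: v + x0)) t 1 <-> derivable f (t *: v + x0) v).
Proof.
have quotientE :
    (fun h : R => h^-1 *: (((fun s : R => f (s *: v + x0)) \o shift t) (h *: 1)
                           - f (t *: v + x0)))
    = (fun h : R => h^-1 *: ((f \o shift (t *: v + x0)) (h *: v) - f (t *: v + x0))).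
  apply: funext => h /=; congr (_ *: (f _ - _)).
  by rewrite [h *: 1]mulr1 scalerDl addrA.
by rewrite /derive /derivable /= quotientE.
Qed.

(* Compare s |-> f (s v + x0) with s |-> c/2 |v|^2 s^2: their difference has a
   nonpositive derivative on [0, 1] by Cauchy-Schwarz. *)
Lemma increment_le_of_grad_bound f x0 v (c : R) :
  (forall y, differentiable f y) ->
  (forall s, 0 <= s -> s <= 1 -> enorm (grad f (s *: v + x0)) <= c * s * enorm v) ->
  f (v + x0) - f x0 <= c / 2 * enorm v ^+ 2.
Proof.
move=> df grad_le.
pose K := c / 2 * enorm v ^+ 2.
pose g := fun s : R => f (s *: v + x0).
pose phi := g - K \*: (@GRing.exp R ^~ 2).
have dg t : derivable g t 1 by apply/(derive_line f x0 v t).2; exact: diff_derivable.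
have dsq t : derivable (K \*: (@GRing.exp R ^~ 2)) t 1.
  by apply: derivableZ; exact: exprn_derivable.
have dphi t : derivable phi t 1 by exact: derivableB.
have phi_cont : {within [set` `[0, 1]%R], continuous phi}.
  by apply: derivable_within_continuous => t _; exact: dphi.
have phi'_le0 t : t \in `]0, 1[%R -> derive1 phi t <= 0.
  rewrite in_itv /= => /andP [t_gt0 t_lt1].
  rewrite derive1E deriveB // (derive_line f x0 v t).1.
  rewrite deriveZ; last exact: exprn_derivable.
  rewrite exp_derive derive_grad_dot //.
  have := dot_le (grad f (t *: v + x0)) v.
  have := grad_le t (ltW t_gt0) (ltW t_lt1).
  have := enorm_ge0 v.
  rewrite /K /= expr1 [_ *: 1]mulr1 /GRing.scale /= subr_le0.
  move: (dot _ _) (enorm (grad _ _)) (enorm v) => d b e e_ge0 b_le d_le.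
  have -> : c / 2 * e ^+ 2 * (2%:R * t) = c * t * e * e by field.
  by apply: le_trans d_le _; apply: ler_wpM2r.
have := ler0_derive1_le_cc (fun t _ => dphi t) phi'_le0 phi_cont.
move=> /(_ 1 0); rewrite !in_itv /= ler01 !lexx /= => /(_ isT isT isT).
rewrite /phi /g /= !fctE /= scale1r scale0r add0r.
by rewrite expr0n /= expr1n /GRing.scale /= mulr0 mulr1 subr0 -/K; lra.
Qed.

Lemma differentiable_remainder_le (G : 'rV[R]_k -> 'rV[R]_k) x0 (eta : R) :
  differentiable G x0 -> 0 < eta ->
  exists2 rho, 0 < rho & forall h, enorm h < rho ->
    enorm (G (h + x0) - G x0 - 'd G x0 h) <= eta * enorm h.
Proof.
move=> dG eta_gt0.
have eta'_gt0 : 0 < eta / (k%:R + 1) by rewrite divr_gt0 // ltr_wpDl.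
have /eqaddoP/(_ _ eta'_gt0)/nbhs_norm0P[rho rho_gt0 small] := diff_locally dG.
exists rho => // h h_lt.
have := small h (le_lt_trans (normr_le_enorm h) h_lt); rewrite /= !fctE /= => rem_le.
have -> : G (h + x0) - G x0 - 'd G x0 h
    = (G \o shift x0) h - (cst (G x0) h + 'd G x0 h).
  by rewrite /= opprD addrA.
apply: le_trans (enorm_le_normr _) _.
apply: le_trans (ler_wpM2l (ler0n _ _) rem_le) _.
rewrite mulrA; apply: ler_pM.
- by rewrite mulr_ge0 ?divr_ge0 ?addr_ge0 // ltW.
- exact: normr_ge0.
- rewrite mulrA ler_pdivrMr ?ltr_wpDl // mulrDr mulr1 [eta * _]mulrC lerDl; exact: ltW.
- exact: normr_le_enorm.
Qed.

End Calculus.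

Lemma sufficient_decrease_le_gap {R : realType} {T : topologicalType}
    (F : T -> R) (x : nat -> T) (c : nat -> R) (xinf : T) :
  (forall n, 0 <= c n) -> (forall n, F (x n.+1) - F (x n) <= - c n) ->
  {for xinf, continuous F} -> x @ \oo --> xinf ->
  forall n, c n <= F (x n) - F xinf.
Proof.
move=> c_ge0 decrease F_cont x_cvg n.
have F_noninc : nonincreasing_seq (F \o x).
  by apply/nonincreasing_seqP => m /=; have := c_ge0 m; have := decrease m; lra.
have Fx_cvg : (F \o x) @ \oo --> F xinf by exact: continuous_cvg.
have := nonincreasing_cvgn_ge F_noninc (cvgP _ Fx_cvg) n.+1.
by rewrite (cvg_lim _ Fx_cvg) //=; have := decrease n; lra.
Qed.

Section NondegenerateCritical.
Context {R : realType} {k : nat} (f : 'rV[R]_k -> R) (xinf : 'rV[R]_k).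

Lemma grad_near_hessian (eta : R) :
  differentiable (grad f) xinf -> grad f xinf = 0 -> 0 < eta ->
  exists2 rho, 0 < rho & forall h, enorm h < rho ->
    enorm (grad f (h + xinf) - h *m (hessian f xinf)^T) <= eta * enorm h.
Proof.
move=> dG grad0 eta_gt0.
have [rho rho_gt0 rem_le] := differentiable_remainder_le _ _ _ dG eta_gt0.
by exists rho => // h /rem_le; rewrite grad0 subr0 diff_grad_hessian.
Qed.

Lemma increment_le_near_critical (eta rho : R) v :
  (forall y, differentiable f y) ->
  (forall h, enorm h < rho ->
     enorm (grad f (h + xinf) - h *m (hessian f xinf)^T) <= eta * enorm h) ->
  enorm v < rho ->
  f (v + xinf) - f xinf <= (opnorm (hessian f xinf) + eta) / 2 * enorm v ^+ 2.
Proof.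
move=> f_diff near_lin v_lt; apply: increment_le_of_grad_bound => // s s_ge0 s_le1.
have sv_norm : enorm (s *: v) = s * enorm v by rewrite enormZ ger0_norm.
have sv_lt : enorm (s *: v) < rho.
  by rewrite sv_norm; apply: le_lt_trans v_lt; rewrite ler_piMl ?enorm_ge0.
rewrite -[grad f _](subrK ((s *: v) *m (hessian f xinf)^T)).
apply: le_trans (enormD _ _) _.
apply: le_trans (lerD (near_lin _ sv_lt) (enorm_mul_tr_le_opnorm _ _)) _.
by rewrite sv_norm -mulrDl (addrC eta) mulrA.
Qed.

Lemma near_critical_bounds (eps : R) :
  (forall y, differentiable f y) -> differentiable (grad f) xinf ->
  grad f xinf = 0 -> hessian f xinf \in unitmx -> 0 < eps ->
  exists2 rho, 0 < rho & forall v, enorm v < rho ->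
    f (v + xinf) - f xinf <= (opnorm (hessian f xinf) + eps) / 2 * enorm v ^+ 2 /\
    enorm v <= (opnorm (invmx (hessian f xinf)) + eps) * enorm (grad f (v + xinf)).
Proof.
move=> f_diff dG grad0 H_unit eps_gt0.
set B := opnorm (invmx (hessian f xinf)).
have B_ge0 : 0 <= B by exact: opnorm_ge0.
have BBeps_ge0 : 0 <= B * (B + eps) by rewrite mulr_ge0 // addr_ge0 // ltW.
have den_gt0 : 0 < 1 + B * (B + eps) by rewrite ltr_pwDl.
pose eta := eps / (1 + B * (B + eps)).
have eta_gt0 : 0 < eta by rewrite divr_gt0.
have eta_le : eta <= eps by rewrite ler_pdivrMr // ler_peMr ?lerDl // ltW.
have eta_small : B * eta * (B + eps) <= eps.
  have -> : B * eta * (B + eps) = eps * (B * (B + eps) / (1 + B * (B + eps))).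
    by rewrite /eta; field; rewrite gt_eqF.
  apply: ler_piMr; first exact: ltW.
  by rewrite ler_pdivrMr // mul1r lerDr.
have [rho rho_gt0 near_lin] := grad_near_hessian eta dG grad0 eta_gt0.
exists rho => // v v_lt; split.
- apply: le_trans (increment_le_near_critical _ _ _ f_diff near_lin v_lt) _.
  by apply: ler_wpM2r; [exact: sqr_ge0 | rewrite ler_pM2r // lerD2l].
- apply: (ler_absorb _ _ _ _ _ B_ge0 eps_gt0 (enorm_ge0 _) eta_small).
  exact: (enorm_le_inverse _ _ _ _ H_unit (near_lin _ v_lt)).
Qed.

End NondegenerateCritical.

Theorem theorem1 (R : realType) (k : nat) (f : 'rV[R]_k -> R) (alpha : R)
  (x : nat -> 'rV[R]_k) (delta : nat -> R) (xinf : 'rV[R]_k) :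
  C1 f -> 0 < alpha -> alpha < 1 ->
  (forall n, 0 < delta n) ->
  (forall n, x n.+1 = x n - delta n *: grad f (x n)) ->
  (forall n, f (x n - delta n *: grad f (x n)) - f (x n)
             <= - (alpha * delta n * enorm (grad f (x n)) ^+ 2)) ->
  (forall n, grad f (x n) != 0) ->
  x @ \oo --> xinf ->
  grad f xinf = 0 -> C2_near f xinf -> hessian f xinf \in unitmx ->
  forall eps : R, 0 < eps -> exists N : nat, forall n : nat, (N <= n)%N ->
    alpha * delta n <=
      2^-1 * (opnorm (hessian f xinf) + eps)
           * (opnorm (invmx (hessian f xinf)) + eps) ^+ 2.
Proof.
(* alpha < 1 only guarantees that Armijo steps exist; the bound does not use it. *)
move=> [f_diff _] alpha_gt0 _ delta_gt0 x_step armijo grad_neq0 x_cvg grad_xinf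
  [r r_gt0 C2_xinf] H_unit eps eps_gt0.
have [_ [dG _]] := C2_xinf xinf (ballxx _ r_gt0).
have [rho rho_gt0 near] :=
  near_critical_bounds f xinf eps f_diff dG grad_xinf H_unit eps_gt0.
have [N close] := cvg_enorm_lt _ _ _ x_cvg rho_gt0.
exists N => n /close /near[]; rewrite subrK.
set A := opnorm _; set B := opnorm _; set v := x n - xinf; set g := grad f (x n).
move=> gap_ub v_le.
have g_gt0 : 0 < enorm g by apply: enorm_gt0; exact: grad_neq0.
have gap_lb : alpha * delta n * enorm g ^+ 2 <= f (x n) - f xinf.
  apply: (sufficient_decrease_le_gap f x
    (fun m => alpha * delta m * enorm (grad f (x m)) ^+ 2)) => //.
  - by move=> m; rewrite mulr_ge0 ?sqr_ge0 // mulr_ge0 // ltW.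
  - by move=> m; rewrite x_step.
  - exact: differentiable_continuous.
rewrite -(ler_pM2r (exprn_gt0 2 g_gt0)); apply: le_trans gap_lb (le_trans gap_ub _).
have -> : 2^-1 * (A + eps) * (B + eps) ^+ 2 * enorm g ^+ 2
    = (A + eps) / 2 * ((B + eps) * enorm g) ^+ 2 by ring.
apply: ler_wpM2l; first by rewrite divr_ge0 // addr_ge0 ?opnorm_ge0 // ltW.
by rewrite lerXn2r ?nnegrE ?enorm_ge0 // (le_trans (enorm_ge0 v)).
Qed.
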